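(* There is an absolute constant $c$ such that for every perfect square $n=\ell^2$, the tilted grid sequence $S\in[n]^n$ satisfies $\mathrm{OPT}(S)\le c\,n$.
   Context: Tilted grid sequence: let $\ell=\sqrt n$ and consider the $n$ points $\{(i\ell+(j-1),\ j\ell+i-1): i,j\in[\ell]\}$; no two share an $x$- or $y$-coordinate. $S$ is the permutation obtained by listing the points in increasing order of $y$-coordinate (time) and replacing each point's $x$-coordinate (key) by its rank among all $x$-coordinates. Dynamic BST model: an algorithm chooses an initial BST on $[n]$. To serve each access it touches a connected set of nodes containing the root and the accessed key, may rearrange them into any BST shape, and pays the number of touched nodes. $\mathrm{OPT}(S)$ is the minimum total cost over all offline algorithms. *)

From mathcomp Require Import all_boot.
Set Implicit Arguments. Unset Strict Implicit. Unset Printing Implicit Defensive.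

Inductive tree := Leaf | Node of tree & nat & tree.

Fixpoint inorder (t : tree) : seq nat :=
  if t is Node l k r then inorder l ++ k :: inorder r else [::].

Fixpoint nnodes (t : tree) : nat :=
  if t is Node l _ r then (nnodes l + nnodes r).+1 else 0.

(* A BST on the key set [n] = {1,...,n}: its in-order traversal is 1,2,...,n
   (this encodes both the key set and the search-tree property). *)
Definition bst_on (n : nat) (t : tree) : Prop := inorder t = iota 1 n.

(* [fill X fs]: plug the trees of [fs] (in left-to-right order) into the
   null-child positions of the "top part" X; returns the tree and the
   unused rest of [fs].  When size fs = (nnodes X).+1 every tree is used. *)
Fixpoint fill (X : tree) (fs : seq tree) : tree * seq tree :=
  match X with
  | Leaf => (head Leaf fs, behead fs)
  | Node l k r =>
      let p := fill l fs in
      let q := fill r p.2 in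
      (Node p.1 k q.1, q.2)
  end.

Definition fillT (X : tree) (fs : seq tree) : tree := (fill X fs).1.

(* Serving one access to key x in tree T, ending in tree T', at cost c:
   T decomposes as a top part X (a connected set of nodes containing the
   root) with the fringe subtrees F hanging below it; x is a node of X;
   X is rearranged into an arbitrary BST X' on the same keys, and the
   fringe subtrees are reattached in their (forced) positions. *)
Definition access_step (T : tree) (x : nat) (T' : tree) (c : nat) : Prop :=
  exists (X X' : tree) (F : seq tree),
    [/\ size F = (nnodes X).+1,
        T = fillT X F,
        x \in inorder X,
        inorder X' = inorder X &
        T' = fillT X' F] /\ c = nnodes X.

Inductive serves : tree -> seq nat -> nat -> Prop :=
  | serves_nil T : serves T [::] 0
  | serves_cons T x s T' c k :
      access_step T x T' c -> serves T' s k -> serves T (x :: s) (c + k).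

(* OPT(S) <= b  (for a sequence S over [n]): some offline algorithm, i.e. some
   initial BST on [n] together with a sequence of legal access steps, serves S
   with total cost at most b.  Since OPT(S) is the minimum of these costs,
   this is exactly "OPT(S) <= b". *)
Definition OPT_le (n : nat) (S : seq nat) (b : nat) : Prop :=
  exists (T0 : tree) (k : nat), [/\ bst_on n T0, serves T0 S k & k <= b].

Definition tilted_points (l : nat) : seq (nat * nat) :=
  [seq (i * l + (j - 1), j * l + i - 1) | i <- iota 1 l, j <- iota 1 l].

Definition xrank (l x : nat) : nat :=
  (count (fun p : nat * nat => p.1 < x) (tilted_points l)).+1.

Definition tilted_grid (l : nat) : seq nat :=
  [seq xrank l p.1 | p <- sort (fun p q : nat * nat => p.2 <= q.2) (tilted_points l)].

From mathcomp Require Import all_boot zify.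
Set Implicit Arguments. Unset Strict Implicit. Unset Printing Implicit Defensive.

(* Number the keys row by row, key [j + k * l] lying in row [k] and column [j].  The
   tilted grid sequence visits the columns j = 1, ..., l in turn, each one upwards.  The
   algorithm keeps the column about to be visited on the right spine of the tree.  Each
   access but the last of a round is at the root and rotates the next spine key up, at
   cost 2, which turns the right spine into a left spine.  The last access touches this
   left spine and the top one or two nodes of each subtree hanging from it, O(l) nodes,
   and rebuilds the right spine of the next column, whose keys are the successors of the
   current ones.  So every round costs at most 5 l and OPT(S) <= 5 l^2. *)

Definition column (l j : nat) : seq nat := [seq j + k * l | k <- iota 1 l.-1].
Definition round (l j : nat) : seq nat := j :: column l j.

Lemma flatten_iota_blocks l k m :
  flatten [seq [seq a * l + (b - 1) | b <- iota 1 l] | a <- iota k m] = iota (k * l) (m * l).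
Proof.
have block a : [seq a * l + (b - 1) | b <- iota 1 l] = iota (a * l) l.
  rewrite -[1]/(1 + 0) iotaDl -map_comp -[a * l]addn0 iotaDl.
  by apply: eq_map => b /=; rewrite !addn0 addKn.
elim: m k => [|m IH] k //=.
by rewrite block IH [m.+1 * l]mulSn iotaD mulSn addnC.
Qed.

Definition points_by_y (l : nat) : seq (nat * nat) :=
  flatten [seq [seq (i * l + (j - 1), j * l + i - 1) | i <- iota 1 l] | j <- iota 1 l].

Lemma map_snd_points_by_y l : map snd (points_by_y l) = iota l (l * l).
Proof.
rewrite -[l in iota l _]mul1n -flatten_iota_blocks map_flatten -map_comp.
congr flatten; apply: eq_map => j /=; rewrite -map_comp.
by apply/eq_in_map => i; rewrite mem_iota => /andP[i_gt0 _] /=; rewrite addnBA.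
Qed.

Lemma map_fst_tilted_points l : map fst (tilted_points l) = iota l (l * l).
Proof.
rewrite -[l in iota l _]mul1n -flatten_iota_blocks /tilted_points map_flatten -map_comp.
by congr flatten; apply: eq_map => i /=; rewrite -map_comp.
Qed.

Lemma mem_points_by_y l : tilted_points l =i points_by_y l.
Proof. by move=> z; apply/allpairsP/allpairsP => -[[i j] /= [? ? ->]]; exists (j, i). Qed.

Lemma sort_tilted_points l :
  sort (fun p q : nat * nat => p.2 <= q.2) (tilted_points l) = points_by_y l.
Proof.
set leT := fun p q : nat * nat => p.2 <= q.2; set ltT := fun p q : nat * nat => p.2 < q.2.
have uniq_by_y : uniq (points_by_y l).
  by apply: (@map_uniq _ _ snd); rewrite map_snd_points_by_y iota_uniq.
have perm_pts : perm_eq (sort leT (tilted_points l)) (points_by_y l).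
  rewrite perm_sort; apply: uniq_perm (mem_points_by_y l) => //.
  by apply: (@map_uniq _ _ fst); rewrite map_fst_tilted_points iota_uniq.
apply: (@irr_sorted_eq _ ltT); last exact: perm_mem.
- by move=> ? ? ?; exact: ltn_trans.
- by move=> ?; rewrite /ltT ltnn.
- rewrite -(@sorted_map _ _ snd ltn) ltn_sorted_uniq_leq sorted_map.
  rewrite (perm_uniq (perm_map snd perm_pts)) map_snd_points_by_y iota_uniq.
  by apply: sort_sorted => p q; exact: leq_total.
- by rewrite -(@sorted_map _ _ snd ltn) map_snd_points_by_y iota_ltn_sorted.
Qed.

Lemma count_lt_iota x a n : count (fun y => y < x) (iota a n) = minn n (x - a).
Proof. by elim: n a => [|n IH] a /=; [rewrite min0n | rewrite IH; case: ltnP; lia]. Qed.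

Lemma xrank_grid l k j : k < l -> 0 < j <= l -> xrank l (k.+1 * l + (j - 1)) = j + k * l.
Proof.
move=> lt_kl /andP[j_gt0 le_jl].
rewrite /xrank -(count_map fst (fun y => y < _)) map_fst_tilted_points count_lt_iota.
have : k.+1 * l <= l * l by rewrite leq_mul2r lt_kl orbT.
by rewrite mulSn; lia.
Qed.

Lemma round_iota l j : 0 < l -> round l j = [seq j + k * l | k <- iota 0 l].
Proof. by case: l => // l _; rewrite /round /= addn0. Qed.

Lemma tilted_grid_rounds l : 0 < l -> tilted_grid l = flatten [seq round l j | j <- iota 1 l].
Proof.
move=> l_gt0; rewrite /tilted_grid sort_tilted_points map_flatten -map_comp.
congr flatten; apply/eq_in_map => j; rewrite mem_iota add1n => /andP[j_gt0 lt_j] /=.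
rewrite round_iota // -map_comp -[iota 1 l]/(iota (1 + 0) l) iotaDl -map_comp.
apply/eq_in_map => k; rewrite mem_iota => /andP[_ lt_kl] /=.
by rewrite add1n xrank_grid // j_gt0 -ltnS.
Qed.

Lemma fill_cat X fs fs' : size fs = (nnodes X).+1 ->
  fill X (fs ++ fs') = (fillT X fs, fs').
Proof.
elim: X fs fs' => [|l IHl k r IHr] fs fs' /=; first by case: fs => [|f [|]].
move=> size_fs; rewrite -(cat_take_drop (nnodes l).+1 fs) -catA.
have size_take_fs : size (take (nnodes l).+1 fs) = (nnodes l).+1.
  by rewrite size_take size_fs ltnS leq_addr.
have size_drop_fs : size (drop (nnodes l).+1 fs) = (nnodes r).+1.
  by rewrite size_drop size_fs; lia.
rewrite /fillT /= !IHl //= !IHr ?cats0 //.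
Qed.

Lemma fillT_Node l k r fs1 fs2 : size fs1 = (nnodes l).+1 ->
  fillT (Node l k r) (fs1 ++ fs2) = Node (fillT l fs1) k (fillT r fs2).
Proof. by move=> size_fs1; rewrite /fillT /= fill_cat. Qed.

Lemma size_inorder t : size (inorder t) = nnodes t.
Proof. by elim: t => //= l IHl k r IHr; rewrite size_cat /= IHl IHr addnS. Qed.

Fixpoint rspine (ps : seq (tree * nat)) (G : tree) : tree :=
  if ps is (g, k) :: ps' then Node g k (rspine ps' G) else G.

Fixpoint lspine (P : tree) (r : nat) (ps : seq (tree * nat)) (G : tree) : tree :=
  if ps is (g, k) :: ps' then lspine (Node P r g) k ps' G else Node P r G.

Lemma lspine_root P r ps G :
  exists P', lspine P r ps G = Node P' (last r (map snd ps)) G.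
Proof. by elim: ps P r => [|[g k] ps IH] P r /=; [exists P | apply: IH]. Qed.

Lemma access_root P r G : access_step (Node P r G) r (Node P r G) 1.
Proof.
exists (Node Leaf r Leaf), (Node Leaf r Leaf), [:: P; G].
by split=> //; split=> //; rewrite inE.
Qed.

Lemma access_rotate P r g k G :
  access_step (Node P r (Node g k G)) r (Node (Node P r g) k G) 2.
Proof.
exists (Node Leaf r (Node Leaf k Leaf)), (Node (Node Leaf r Leaf) k Leaf).
by exists [:: P; g; G]; split=> //; split=> //; rewrite !inE eqxx.
Qed.

Definition serves_to T s T' k :=
  forall s' k', serves T' s' k' -> serves T (s ++ s') (k + k').

Lemma serves_to_nil T : serves_to T [::] T 0.
Proof. by []. Qed.

Lemma serves_to_access T x T' c : access_step T x T' c -> serves_to T [:: x] T' c.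
Proof. by move=> step s' k'; apply: serves_cons step. Qed.

Lemma serves_to_cat T s1 T1 k1 s2 T2 k2 :
  serves_to T s1 T1 k1 -> serves_to T1 s2 T2 k2 -> serves_to T (s1 ++ s2) T2 (k1 + k2).
Proof. by move=> run1 run2 s3 k3 run3; rewrite -catA -addnA; apply/run1/run2. Qed.

Lemma serves_to_serves T s T' k : serves_to T s T' k -> serves T s k.
Proof. by move/(_ [::] 0 (serves_nil _)); rewrite cats0 addn0. Qed.

Lemma serves_to_rotations P r ps G :
  serves_to (Node P r (rspine ps G)) (belast r (map snd ps)) (lspine P r ps G)
    (2 * size ps).
Proof.
elim: ps P r => [|[g k] ps IH] P r /=; first exact: serves_to_nil.
rewrite -cat1s mulnS.
exact: serves_to_cat (serves_to_access (access_rotate _ _ _ _ _)) (IH _ _).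
Qed.

(* In round [j] the spine keys are the [j + k * l].  The subtree between consecutive
   spine keys [r] and [r + l] holds the unvisited rest of the row of [r], as a tree with
   root [r + 1] and empty left subtree, and the already visited keys of the next row,
   encoded by [Some (d, R)] with [d] the least of them; [shift_row] records that [r + l]
   joins the visited keys. *)
Definition ext := option (nat * tree).

Definition gapT (e : ext) (t : tree) : tree := if e is Some (d, R) then Node t d R else t.
Definition ext_trees (e : ext) : seq tree := if e is Some (_, R) then [:: R] else [::].

Definition extend (e : ext) (k : nat) : ext :=
  Some (if e is Some (d, R) then (d, Node R k Leaf) else (k, Leaf)).
Definition shift_row (row : ext * nat) : ext * nat := (extend row.1 row.2, row.2.+1).

Definition gap (rest : nat -> tree) (e : ext) (r : nat) : tree :=
  gapT e (Node Leaf r.+1 (rest r.+1)).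

Fixpoint gaps (g : ext -> nat -> tree) (r : nat) (rows : seq (ext * nat)) :=
  if rows is (e, k) :: rows' then (g e r, k) :: gaps g k rows' else [::].

Lemma map_snd_gaps g r rows : map snd (gaps g r rows) = map snd rows.
Proof. by elim: rows r => [|[e k] rows IH] r //=; rewrite IH. Qed.

Definition skel_gap (e : ext) (r : nat) : tree :=
  gap (fun=> Leaf) (if e is Some (d, _) then Some (d, Leaf) else None) r.

(* The nodes touched by the last access of a round, before and after it. *)
Definition pre_skeleton (P : tree) (r : nat) (rows : seq (ext * nat)) : tree :=
  lspine P r (gaps skel_gap r rows) (skel_gap None (last r (map snd rows))).

Definition post_skeleton (rows : seq (ext * nat)) : tree :=
  rspine [seq (if row.1 is Some (d, _) then Node Leaf d (Node Leaf row.2 Leaf)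
               else Node Leaf row.2 Leaf, row.2.+1) | row <- rows] Leaf.

Lemma inorder_pre_skeleton P r rows :
  inorder (pre_skeleton P r rows) = inorder P ++ r :: r.+1 :: inorder (post_skeleton rows).
Proof.
rewrite /pre_skeleton /post_skeleton.
elim: rows P r => [|[e k] rows IH] P r //=.
by rewrite IH /= -catA; case: e => [[d R]|].
Qed.

Lemma nnodes_post_skeleton rows : nnodes (post_skeleton rows) <= 3 * size rows.
Proof.
rewrite /post_skeleton.
by elim: rows => [|[[[d R]|] k] rows IH] //=; rewrite mulnS; lia.
Qed.

Section Flip.
Variable rest : nat -> tree.

Fixpoint fringe (r : nat) (rows : seq (ext * nat)) : seq tree :=
  if rows is (e, k) :: rows' then rest r.+1 :: ext_trees e ++ Leaf :: fringe k rows'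
  else [:: rest r.+1].

Lemma size_fringe r rows : size (fringe r rows) = (nnodes (post_skeleton rows)).+1.
Proof.
rewrite /post_skeleton; elim: rows r => [|[e k] rows IH] r //=.
by rewrite size_cat /= IH; case: e => [[d R]|] /=; lia.
Qed.

Lemma fillT_pre_skeleton P Fp r rows : size Fp = (nnodes P).+1 ->
  fillT (pre_skeleton P r rows) (Fp ++ Leaf :: fringe r rows) =
  lspine (fillT P Fp) r (gaps (gap rest) r rows) (gap rest None (last r (map snd rows))).
Proof.
rewrite /pre_skeleton.
elim: rows P Fp r => [|[e k] rows IH] P Fp r size_Fp /=.
  by rewrite fillT_Node.
rewrite -[Leaf :: _]/([:: Leaf, rest r.+1 & ext_trees e] ++ _) catA IH.
- by rewrite fillT_Node //; case: e => [[d R]|].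
- by rewrite size_cat size_Fp; case: e => [[d R]|] /=; lia.
Qed.

Lemma fillT_post_skeleton r rows :
  fillT (post_skeleton rows) (fringe r rows) =
  rspine (gaps (fun e a => gapT e (rest a)) r.+1 (map shift_row rows))
         (rest (last r (map snd rows)).+1).
Proof.
rewrite /post_skeleton.
elim: rows r => [|[e k] rows IH] r //=.
have -> : rest r.+1 :: ext_trees e ++ Leaf :: fringe k rows =
          (rest r.+1 :: ext_trees e ++ [:: Leaf]) ++ fringe k rows by rewrite /= -catA.
by case: e => [[d R]|]; rewrite fillT_Node // IH.
Qed.

Lemma access_flip D r rows :
  let k := last r (map snd rows) in
  exists2 c, c <= 3 * size rows + 2 &
  access_step (lspine D r (gaps (gap rest) r rows) (gap rest None k)) k
    (Node (Node D r Leaf) r.+1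
       (rspine (gaps (fun e a => gapT e (rest a)) r.+1 (map shift_row rows)) (rest k.+1)))
    c.
Proof.
set X := pre_skeleton Leaf r rows.
set X' := Node (Node Leaf r Leaf) r.+1 (post_skeleton rows).
have inorder_X : inorder X' = inorder X by rewrite inorder_pre_skeleton.
have nnodes_X : nnodes X = nnodes X' by rewrite -!size_inorder inorder_X.
exists (nnodes X); first by rewrite nnodes_X /=; have := nnodes_post_skeleton rows; lia.
exists X, X', (D :: Leaf :: fringe r rows); split=> //; split=> //.
- by rewrite /= size_fringe nnodes_X.
- by rewrite -[D :: _]/([:: D] ++ _) fillT_pre_skeleton.
- rewrite /X /pre_skeleton.
  have [P' ->] := lspine_root Leaf r (gaps skel_gap r rows)
                              (skel_gap None (last r (map snd rows))).
  by rewrite map_snd_gaps /= mem_cat inE eqxx orbT.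
- by rewrite -[D :: _]/([:: D; Leaf] ++ _) fillT_Node // fillT_post_skeleton.
Qed.
End Flip.

Fixpoint rpath (s : seq nat) : tree :=
  if s is x :: s' then Node Leaf x (rpath s') else Leaf.

Lemma inorder_rpath s : inorder (rpath s) = s.
Proof. by elim: s => //= x s ->. Qed.

Definition rpath_after (m a : nat) : tree := rpath (iota a.+1 m).

Definition spine_state (l j : nat) (T : tree) : Prop :=
  exists D ps G, map snd ps = column l j /\ T = Node D j (rspine ps G).

Definition gap_state (l j : nat) (T : tree) : Prop :=
  let rest := rpath_after (l - j.+1) in
  exists D rows, map snd rows = column l j /\
    T = Node D j (rspine (gaps (gap rest) j rows) (gap rest None (last j (map snd rows)))).

Definition round_state (l j : nat) (T : tree) : Prop :=
  spine_state l j T /\ (j < l -> gap_state l j T).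

Lemma gap_state_spine l j T : gap_state l j T -> spine_state l j T.
Proof.
case=> D [rows [col_rows ->]].
by do 3 eexists; split; last reflexivity; rewrite map_snd_gaps.
Qed.

Lemma size_column l j : size (column l j) = l.-1.
Proof. by rewrite size_map size_iota. Qed.

Lemma column_succ l j : map succn (column l j) = column l j.+1.
Proof. by rewrite -map_comp. Qed.

Lemma serves_to_round l j T : j < l -> gap_state l j T ->
  exists T' k, [/\ k <= 5 * l, serves_to T (round l j) T' k & round_state l j.+1 T'].
Proof.
move=> lt_jl [D [rows [col_rows ->]]].
set rest := rpath_after (l - j.+1).
have size_rows : size rows = l.-1 by rewrite -(size_map snd) col_rows size_column.
have [c le_c step] := access_flip rest D j rows.
set ps := gaps (gap rest) j rows.
have size_ps : size ps = size rows by rewrite -(size_map snd) map_snd_gaps size_map.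
have round_split : round l j = belast j (map snd ps) ++ [:: last j (map snd rows)].
  by rewrite map_snd_gaps cats1 -lastI col_rows.
set rows' := map shift_row rows.
have col_rows' : map snd rows' = column l j.+1.
  by rewrite -column_succ -col_rows -!map_comp.
eexists _, (2 * size ps + c); split; first by rewrite size_ps size_rows; lia.
  rewrite round_split; apply: serves_to_cat; first exact: serves_to_rotations.
  exact: serves_to_access step.
split; first by do 3 eexists; split; last reflexivity; rewrite map_snd_gaps.
move=> lt_j1l; exists (Node D j Leaf), rows'; split=> //.
have last_rows' : last j.+1 (map snd rows') = (last j (map snd rows)).+1.
  by rewrite -map_comp (eq_map (_ : snd \o shift_row =1 succn \o snd)) // map_comp last_map.
(* [gapT e (rpath_after m.+1 a)] unfolds to [gap (rpath_after m) e a]. *)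
by rewrite last_rows' /rest (_ : l - j.+1 = (l - j.+2).+1) //; lia.
Qed.

Lemma serves_last_round l j T : 0 < l -> spine_state l j T ->
  exists2 k, k <= 2 * l & serves T (round l j) k.
Proof.
move=> l_gt0 [D [ps [G [col_ps ->]]]].
exists (2 * size ps + 1); first by rewrite -(size_map snd) col_ps size_column; lia.
have [P root_eq] := lspine_root D j ps G.
rewrite /round -col_ps lastI -cats1.
apply: serves_to_serves; apply: serves_to_cat; first exact: serves_to_rotations.
by rewrite root_eq; apply/serves_to_access/access_root.
Qed.

Lemma serves_rounds l d j T : 0 < j -> j + d = l -> round_state l j T ->
  exists2 k, k <= 5 * l * d.+1 & serves T (flatten [seq round l i | i <- iota j d.+1]) k.
Proof.
elim: d j T => [|d IH] j T j_gt0 jd [spine_T gap_T].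
  have [k le_k serves_k] := serves_last_round (ltac:(lia) : 0 < l) spine_T.
  by exists k; [lia | rewrite /= cats0].
have lt_jl : j < l by lia.
have [T' [k [le_k run state_T']]] := serves_to_round lt_jl (gap_T lt_jl).
have [k' le_k' serves_k'] := IH j.+1 T' isT ltac:(lia) state_T'.
by exists (k + k'); [rewrite mulnS; lia | exact: run].
Qed.

Lemma inorder_initial_spine m n r :
  let rows := [seq (None, r + i * m.+2) | i <- iota 1 n] in
  inorder (rspine (gaps (gap (rpath_after m)) r rows)
                  (gap (rpath_after m) None (last r (map snd rows)))) =
  iota r.+1 (n * m.+2 + m.+1).
Proof.
elim: n r => [|n IH] r rows; first by rewrite /= inorder_rpath.
have -> : rows = (None, r + m.+2) :: [seq (None, r + m.+2 + i * m.+2) | i <- iota 1 n].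
  rewrite /rows /= mul1n -[2]/(1 + 1) iotaDl -map_comp; congr (_ :: _).
  by apply: eq_map => i /=; rewrite mulSn addnA.
rewrite [rspine _ _]/= [inorder _]/= IH -/(rpath_after m r) inorder_rpath.
have -> : n.+1 * m.+2 + m.+1 = m.+1 + (n * m.+2 + m.+1).+1 by rewrite mulSn; lia.
by rewrite (iotaD r.+1 m.+1) addSnnS.
Qed.

Lemma initial_state l : 0 < l -> exists2 T0, bst_on (l * l) T0 & round_state l 1 T0.
Proof.
case: l => [//|[|m]] _.
  by exists (Node Leaf 1 Leaf) => //; split=> //; exists Leaf, [::], Leaf.
pose rows : seq (ext * nat) := [seq (None, 1 + i * m.+2) | i <- iota 1 m.+1].
have col_rows : map snd rows = column m.+2 1 by rewrite -map_comp.
pose S := rspine (gaps (gap (rpath_after m)) 1 rows)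
                  (gap (rpath_after m) None (last 1 (map snd rows))).
exists (Node Leaf 1 S).
  rewrite /bst_on -[inorder (Node Leaf 1 S)]/(1 :: inorder S) inorder_initial_spine.
  by rewrite (_ : m.+2 * m.+2 = (m.+1 * m.+2 + m.+1).+1) //; lia.
have state_gap : gap_state m.+2 1 (Node Leaf 1 S).
  by exists Leaf, rows; split; last by rewrite subSS subn1.
by split; [apply: gap_state_spine | move=> _].
Qed.

Theorem mainTheorem11 :
  exists c : nat, forall l : nat,
    OPT_le (l * l) (tilted_grid l) (c * (l * l)).
Proof.
exists 5 => l; have [->|l_gt0] := posnP l.
  by exists Leaf, 0; split=> //; apply: serves_nil.
have [T0 bst_T0 state_T0] := initial_state l_gt0.
have l_eq : 1 + l.-1 = l by rewrite add1n prednK.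
have [k le_k serves_k] := serves_rounds (isT : 0 < 1) l_eq state_T0.
rewrite prednK // in le_k serves_k.
by exists T0, k; rewrite tilted_grid_rounds // mulnA.
Qed.
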